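(* Let $(\mathbf{M},\mathcal{B},\mu,f)$ be a measure preserving system and $\varphi:\mathbf{M}\to\mathbb{R}\cup\{\pm\infty\}$ a continuous function. Let $X_j=\varphi\circ f^j$. Let $(u_n)$ be a non-decreasing sequence of real numbers and $(w_n)$ a non-decreasing sequence of integers such that $w_n\,\mu(X_0>u_n)\to\tau$ as $n\to\infty$ for some real number $\tau>0$. Put $U_n=\{X_0>u_n\}$. Then the following statements are equivalent: (1) there exists a probability distribution $m$ on $\mathbb{N}_0$ such that $\mu(\xi^{w_n}_{u_n}=k)\to m(\{k\})$ as $n\to\infty$ for every $k\in\mathbb{N}_0$; (2) there exists a probability distribution $m$ on $\mathbb{N}_0$ such that $\mu\big(\zeta^{\tau/\mu(U_n)}_{U_n}=k\big)\to m(\{k\})$ as $n\to\infty$ for every $k\in\mathbb{N}_0$.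
   Context: Here $\mathbf{M}$ is a compact Riemannian manifold, $f$ a differentiable map, $\mathcal B$ the Borel $\sigma$-algebra and $\mu$ an $f$-invariant probability measure. The rare event process is $\xi^N_{u_n}=\sum_{k=0}^{N-1}\mathbb{I}_{\{X_k>u_n\}}$, and for a set $U$ and $N>0$ the entry count is $\zeta^N_U=\sum_{0\le k<N}\mathbb{I}_U\circ f^k$ (for non-integer $N$ the sum runs over integers $0\le k<N$). $\mathbb I$ denotes the indicator function. *)

From HB Require Import structures.
From mathcomp Require Import all_boot all_order all_algebra.
From mathcomp Require Import all_classical all_reals all_analysis.
Set Implicit Arguments. Unset Strict Implicit. Unset Printing Implicit Defensive.
Import Order.TTheory GRing.Theory Num.Theory.
Local Open Scope classical_set_scope.
Local Open Scope ring_scope.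

Notation borelType M := (g_sigma_algebraType (@open M%type)) (only parsing).

(* zeta^N_U (x) = sum over integers 0 <= k < N of 1_U(f^k x), for real N.
   For nat k, (k < N) forces k < `|ceil N|, so the finite range is enough. *)
Definition entry_count {T : Type} {R : realType} (f : T -> T) (U : set T)
    (N : R) (x : T) : nat :=
  \sum_(k < `|Num.ceil N|%N) (((k%:R : R) < N)%R && (iter k f x \in U) : nat).

Definition rare_event_count {T : Type} {R : realType} (f : T -> T)
    (phi : T -> \bar R) (u : R) (N : int) (x : T) : nat :=
  entry_count f [set y | (u%:E < phi y)%E] (N%:~R : R) x.

(* Both counts are hit counts S_a(x) = #{0 <= j < a | f^j x \in U_n}, with a = w_n and
   a = ceil(tau / mu U_n) respectively.  By invariance every event {f^j \in U_n} has
   measure mu U_n, and S_a, S_b can only differ where one of the |a - b| events with index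
   between a and b occurs; so the laws of S_a and S_b differ by at most |a - b| mu U_n at
   every k.  It remains to see that |w_n - ceil(tau / mu U_n)| mu U_n --> 0.  If
   mu U_n --> 0, rounding up costs at most mu U_n.  Otherwise w_n = w_n mu U_n / mu U_n
   converges, hence is eventually an integer P, and since mu U_n decreases,
   tau <= P mu U_n; so the ceiling never exceeds w_n and the error is at most
   w_n mu U_n - tau. *)

From HB Require Import structures.
From mathcomp Require Import all_boot all_order all_algebra.
From mathcomp Require Import all_classical all_reals all_analysis.
From mathcomp Require Import zify lra.
Set Implicit Arguments. Unset Strict Implicit. Unset Printing Implicit Defensive.
Import Order.TTheory GRing.Theory Num.Theory.
Import numFieldNormedType.Exports.
Local Open Scope classical_set_scope.
Local Open Scope ring_scope.

Definition event_count {T : Type} (E : nat -> set T) (a : nat) (x : T) : nat :=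
  \sum_(0 <= j < a) (x \in E j : nat).

Lemma event_countS {T : Type} (E : nat -> set T) a x :
  event_count E a.+1 x = (event_count E a x + (x \in E a))%N.
Proof. by rewrite /event_count big_nat_recr. Qed.

Lemma event_count_cat {T : Type} (E : nat -> set T) a b (x : T) : (a <= b)%N ->
  event_count E b x = (event_count E a x + \sum_(a <= j < b) (x \in E j : nat))%N.
Proof. by move=> ab; rewrite /event_count (@big_cat_nat _ _ _ a). Qed.

Section event_count_measure.
Context d (T : measurableType d) (R : realType) (mu : probability T R).
Variables (E : nat -> set T) (p : R).
Hypotheses (mE : forall j, measurable (E j)) (muE : forall j, mu (E j) = p%:E).

Lemma measurable_event_count_preimage a (B : set nat) :
  measurable (event_count E a @^-1` B).
Proof.
elim: a B => [|a IH] B.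
  have -> : event_count E 0 = cst 0%N by apply/funext => x; rewrite /event_count big_geq.
  by rewrite preimage_cst; case: ifP.
have -> : event_count E a.+1 @^-1` B =
    (event_count E a @^-1` B `&` ~` E a) `|`
    (event_count E a @^-1` (succn @^-1` B) `&` E a).
  apply/seteqP; split => x; rewrite /preimage /= event_countS.
    case: (boolP (x \in E a)) => [/set_mem Ex|/negP nEx] /=.
      by rewrite addn1; right.
    by rewrite addn0; left; split=> // /mem_set.
  by case=> -[Bx Ex]; [rewrite memNset ?addn0 | rewrite mem_set ?addn1].
by apply: measurableU; apply: measurableI => //; apply: measurableC.
Qed.

Lemma event_count_neq_sub a b : (a <= b)%N ->
  [set x | event_count E a x <> event_count E b x] `<=`
  \big[setU/set0]_(i < b - a) E (a + i)%N.
Proof.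
move=> ab x /=; rewrite (event_count_cat _ x ab).
rewrite -(bigcup_mkord _ (fun i => E (a + i)%N)) => neq.
apply: contrapT => nE; apply: neq.
rewrite big_nat_cond big1 ?addn0 // => j /andP[/andP[aj jb] _].
apply/eqP; rewrite eqb0; apply/negP => /set_mem Ejx; apply: nE.
exists (j - a)%N; first by rewrite /= ltn_sub2r // (leq_ltn_trans aj).
by rewrite subnKC.
Qed.

Lemma le_measure_fiber (g h : T -> nat) (G : set T) k :
  measurable [set x | g x = k] -> measurable [set x | h x = k] -> measurable G ->
  [set x | g x <> h x] `<=` G ->
  (mu [set x | g x = k] <= mu [set x | h x = k] + mu G)%E.
Proof.
move=> mg mh mG gh; apply: le_trans (measureU2 _ mh mG).
apply: le_measure; rewrite ?inE //; first exact: measurableU.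
move=> x /= gx; case: (eqVneq (h x) k) => [|/eqP hx]; first by left.
by right; apply: gh => /=; rewrite gx; exact: nesym.
Qed.

Lemma measure_shifted_events_le a n :
  (mu (\big[setU/set0]_(i < n) E (a + i)%N) <= (n%:R * p)%:E)%E.
Proof.
apply: le_trans (Boole_inequality mu (A := fun i => E (a + i)%N) (fun i _ => mE _)) _.
rewrite (eq_bigr (fun=> p%:E)) => [|i _]; last exact: muE.
by rewrite sumEFin sumr_const card_ord mulr_natl.
Qed.

Lemma dist_event_count a b k :
  `|fine (mu [set x | event_count E a x = k]) - fine (mu [set x | event_count E b x = k])|
    <= `|a%:R - b%:R| * p.
Proof.
wlog ab : a b / (a <= b)%N.
  move=> wlog; case: (leqP a b) => [|/ltnW] ba; first exact: wlog.
  by rewrite distrC [`|a%:R - _|]distrC; exact: wlog.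
have fib c : measurable [set x | event_count E c x = k].
  exact: measurable_event_count_preimage c [set k].
have mG : measurable (\big[setU/set0]_(i < b - a) E (a + i)%N).
  by apply: bigsetU_measurable => i _; exact: mE.
have sub := event_count_neq_sub ab.
have le1 := le_measure_fiber (fib a) (fib b) mG sub.
have le2 := le_measure_fiber (fib b) (fib a) mG (fun x ne => sub x (nesym ne)).
have fin c := fin_num_measure mu _ (fib c).
have fG := fin_num_measure mu _ mG.
have leG := measure_shifted_events_le a (b - a).
rewrite -(fineK (fin a)) -(fineK (fin b)) -(fineK fG) -!EFinD !lee_fin in le1 le2 leG.
have -> : `|a%:R - b%:R| = (b - a)%:R :> R.
  by rewrite distrC natrB // ger0_norm // subr_ge0 ler_nat.
by rewrite ler_distl; apply/andP; split; lra.
Qed.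

End event_count_measure.

Lemma int_cvg_near_cst (R : realType) (z : nat -> int) (l : R) :
  (fun n => (z n)%:~R : R) @ \oo --> l -> exists c : int, \forall n \near \oo, z n = c.
Proof.
move=> /cvgrPdist_lt/(_ (1 / 2)) [|N _ zN]; first by rewrite divr_gt0.
exists (z N); exists N => // n Nn.
have : `|(z n - z N)%:~R : R| < 1.
  rewrite intrB; apply: le_lt_trans (ler_distD l _ _) _.
  rewrite [X in _ < X](splitr 1) ltrD //; first by rewrite distrC; apply: zN.
  by apply: zN => /=.
by rewrite -intr_norm ltrz1; lia.
Qed.

Lemma dist_ceil_div_le (R : archiRealFieldType) (z : int) (c t : R) : 0 < c ->
  `|z%:~R - (Num.ceil (t / c))%:~R| * c <= `|z%:~R * c - t| + c.
Proof.
move=> c0; have tE : t = t / c * c by rewrite divfK ?gt_eqF.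
have /andP[ceil_ge ceil_lt] : t / c <= (Num.ceil (t / c))%:~R < t / c + 1.
  by have := ceil_itv (t / c); rewrite intrB; lra.
rewrite [in X in _ <= X]tE -mulrBl normrM (gtr0_norm c0) -[X in _ <= _ + X]mul1r -mulrDl.
rewrite ler_pM2r //; apply: le_trans (ler_distD (t / c) _ _) _.
by rewrite lerD2l ler_norml; apply/andP; split; lra.
Qed.

Lemma dist_ceil_div_le_of_ge (R : archiRealFieldType) (z : int) (c t : R) : 0 < c ->
  t <= z%:~R * c -> `|z%:~R - (Num.ceil (t / c))%:~R| * c <= z%:~R * c - t.
Proof.
move=> c0 tz; have zge : t / c <= z%:~R by rewrite ler_pdivrMr.
have ceil_le : (Num.ceil (t / c))%:~R <= z%:~R :> R by rewrite ler_int ceil_le_int.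
rewrite ger0_norm ?subr_ge0 // -[X in _ <= _ - X](divfK (lt0r_neq0 c0)) -mulrBl ler_pM2r //.
by rewrite lerD2l lerN2 ceil_ge.
Qed.

Lemma cvg_mul_near_gt0 (R : realType) (m : nat -> R) (w : nat -> int) (tau : R) :
  0 < tau -> (forall n, 0 <= m n) -> (fun n => (w n)%:~R * m n) @ \oo --> tau ->
  \forall n \near \oo, 0 < w n /\ 0 < m n.
Proof.
move=> tau_gt0 m_ge0 wm_tau.
have wm_gt0 : \forall n \near \oo, 0 < (w n)%:~R * m n by exact: cvgr_gt wm_tau _ tau_gt0.
near=> n; have wmn_gt0 : 0 < (w n)%:~R * m n by near: n.
have mn_gt0 : 0 < m n.
  by rewrite lt_def m_ge0 andbT; apply: contraTneq wmn_gt0 => ->; rewrite mulr0 ltxx.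
by move: wmn_gt0; rewrite pmulr_lgt0 // ltr0z.
Unshelve. all: end_near.
Qed.

Lemma cvg_mul_near_cst (R : realType) (m : nat -> R) (w : nat -> int) (tau l : R) :
  0 < tau -> {homo m : i j / (i <= j)%N >-> j <= i} -> (forall n, 0 <= m n) ->
  (fun n => (w n)%:~R * m n) @ \oo --> tau -> m @ \oo --> l -> l != 0 ->
  exists P : int, (\forall n \near \oo, w n = P) /\ forall n, tau <= P%:~R * m n.
Proof.
move=> tau_gt0 m_dec m_ge0 wm_tau m_l l_neq0.
have pos := cvg_mul_near_gt0 tau_gt0 m_ge0 wm_tau.
have [P wP] : exists P, \forall n \near \oo, w n = P.
  apply: (@int_cvg_near_cst _ _ (tau / l)).
  apply: cvg_trans (cvgM wm_tau (cvgV l_neq0 m_l)).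
  apply: near_eq_cvg; near=> n => /=; rewrite mulrK // unitfE gt_eqF //.
  by have [] : 0 < w n /\ 0 < m n by near: n.
have [n [wn [wn_gt0 _]]] := filter_ex (filterI wP pos).
have P_gt0 : 0 < P%:~R :> R by rewrite ltr0z -wn.
have Pm_tau : (fun n => P%:~R * m n) @ \oo --> tau.
  apply: cvg_trans wm_tau; apply: near_eq_cvg; near=> k.
  by have -> : w k = P by near: k.
exists P; split => // k; rewrite -(cvg_lim _ Pm_tau) //.
apply: nonincreasing_cvgn_ge; last exact: cvgP Pm_tau.
by move=> i j ij; rewrite ler_pM2l // m_dec.
Unshelve. all: end_near.
Qed.

Lemma dist_ceil_div_mul_cvg0 (R : realType) (m : nat -> R) (w : nat -> int) (tau : R) :
  0 < tau -> {homo m : i j / (i <= j)%N >-> j <= i} -> (forall n, 0 <= m n) ->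
  (fun n => (w n)%:~R * m n) @ \oo --> tau ->
  (fun n => `|(w n)%:~R - (Num.ceil (tau / m n))%:~R| * m n) @ \oo --> 0.
Proof.
move=> tau_gt0 m_dec m_ge0 wm_tau.
have pos := cvg_mul_near_gt0 tau_gt0 m_ge0 wm_tau.
have wm_dist : (fun n => `|(w n)%:~R * m n - tau|) @ \oo --> 0.
  rewrite -(@normr0 _ R) -(subrr tau).
  by apply: cvg_norm; apply: cvgB => //; exact: cvg_cst.
have m_cvg : m @ \oo --> inf (range m).
  by apply: nonincreasing_cvgn => //; exists 0 => _ [n _ <-].
have [L0|L_neq0] := eqVneq (inf (range m)) 0.
  apply: (@squeeze_cvgr _ _ _ _ (cst 0) (fun n => `|(w n)%:~R * m n - tau| + m n)).
  - near=> n; rewrite mulr_ge0 //=; apply: dist_ceil_div_le.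
    by have [] : 0 < w n /\ 0 < m n by near: n.
  - exact: cvg_cst.
  - by rewrite -[0]addr0; apply: cvgD => //; rewrite -L0.
have [P [wP tau_le]] := cvg_mul_near_cst tau_gt0 m_dec m_ge0 wm_tau m_cvg L_neq0.
apply: (@squeeze_cvgr _ _ _ _ (cst 0) (fun n => `|(w n)%:~R * m n - tau|)) => //.
- near=> n; have -> : w n = P by near: n.
  rewrite mulr_ge0 //=; apply: le_trans (ler_norm _).
  apply: dist_ceil_div_le_of_ge (tau_le n).
  by have [] : 0 < w n /\ 0 < m n by near: n.
- exact: cvg_cst.
Unshelve. all: end_near.
Qed.

Lemma cvg_fine_dist_le (R : realType) (a b : nat -> \bar R) (e : nat -> R) (l : \bar R) :
  l \is a fin_num -> e @ \oo --> 0 -> (\forall n \near \oo, b n \is a fin_num) ->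
  (\forall n \near \oo, `|fine (a n) - fine (b n)| <= e n) ->
  a @ \oo --> l -> b @ \oo --> l.
Proof.
move=> /fineK <- e0 b_fin ab /fine_cvgP[_ al]; apply/fine_cvgP; split => //.
apply: (@squeeze_cvgr _ _ _ _ (fun n => fine (a n) - e n) (fun n => fine (a n) + e n)).
- by near=> n; rewrite -ler_distl distrC; near: n.
- by rewrite -[fine l]subr0; apply: cvgB.
- by rewrite -[fine l]addr0; apply: cvgD.
Unshelve. all: end_near.
Qed.

Lemma entry_count_event_count {T : Type} {R : realType} (f : T -> T) (U : set T) (N : R) :
  0 <= N -> entry_count f U N = event_count (fun j => iter j f @^-1` U) `|Num.ceil N|%N.
Proof.
move=> N_ge0; apply/funext => x; rewrite /entry_count /event_count big_mkord.
apply: eq_bigr => k _; suff -> : (k%:R < N) = true by [].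
have ceil_ge0 : 0 <= Num.ceil N by rewrite ceil_ge0 (lt_le_trans _ N_ge0) // ltrN10.
by have := ltn_ord k; rewrite -ltz_nat (gez0_abs ceil_ge0) ceil_gt_int.
Qed.

Lemma open_preimage_iter (M : topologicalType) (f : M -> M) j (U : set M) :
  continuous f -> open U -> open (iter j f @^-1` U).
Proof.
move=> f_cont; elim: j U => [//|j IH] U U_open.
by apply: (IH (f @^-1` U)); apply: open_comp => // x _; exact: f_cont.
Qed.

Lemma measure_preimage_iter_open (M : ptopologicalType) (R : realType)
    (mu : {measure set (borelType M) -> \bar R}) (f : M -> M) :
  continuous f ->
  (forall A : set (borelType M), measurable A -> mu (f @^-1` A) = mu A) ->
  forall j (U : set M), open U -> mu (iter j f @^-1` U) = mu U.
Proof.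
move=> f_cont f_inv; elim=> [//|j IH] U U_open.
rewrite [LHS](IH (f @^-1` U)); first by apply: f_inv; exact: sub_sigma_algebra.
by apply: open_comp => // x _; exact: f_cont.
Qed.

Lemma open_preimage_ereal_gt (M : topologicalType) (R : realType) (phi : M -> \bar R)
    (u : R) : continuous phi -> open [set y | (u%:E < phi y)%E].
Proof.
move=> phi_cont; rewrite [X in open X](_ : _ = phi @^-1` [set y | (u%:E < y)%E]) //.
by apply: open_comp => [x _|]; [exact: phi_cont | exact: open_ereal_gt_ereal].
Qed.

Lemma measure_ereal_gt_nonincreasing (M : ptopologicalType) (R : realType)
    (mu : probability (borelType M) R) (phi : M -> \bar R) (u : nat -> R) :
  continuous phi -> {homo u : m n / (m <= n)%N >-> m <= n} ->
  {homo (fun n => fine (mu [set y | ((u n)%:E < phi y)%E])) : i j / (i <= j)%N >-> j <= i}.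
Proof.
move=> phi_cont u_incr i j ij.
have meas n : measurable ([set y | ((u n)%:E < phi y)%E] : set (borelType M)).
  by apply: sub_sigma_algebra; exact: open_preimage_ereal_gt.
apply: fine_le; rewrite ?fin_num_measure // le_measure ?inE // => x /=.
by apply: le_lt_trans; rewrite lee_fin u_incr.
Qed.

Section entry_count_invariant.
Context (M : ptopologicalType) (R : realType) (mu : probability (borelType M) R).
Variable f : M -> M.
Hypotheses (f_cont : continuous f)
  (f_inv : forall A : set (borelType M), measurable A -> mu (f @^-1` A) = mu A).
Variables (U : set M) (U_open : open U).

Let hit_meas j : measurable (iter j f @^-1` U : set (borelType M)).
Proof. by apply: sub_sigma_algebra; exact: open_preimage_iter. Qed.

Let hit_mu j : mu (iter j f @^-1` U) = (fine (mu U))%:E.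
Proof.
rewrite (measure_preimage_iter_open f_cont f_inv _ U_open) fineK //.
by apply: fin_num_measure; exact: sub_sigma_algebra.
Qed.

Lemma fin_num_entry_count (N : R) k :
  0 <= N -> mu [set x | entry_count f U N x = k] \is a fin_num.
Proof.
move=> N_ge0; rewrite entry_count_event_count //; apply: fin_num_measure.
exact: (measurable_event_count_preimage hit_meas _ [set k]).
Qed.

Lemma dist_entry_count (N N' : R) k : 0 <= N -> 0 <= N' ->
  `|fine (mu [set x | entry_count f U N x = k]) -
    fine (mu [set x | entry_count f U N' x = k])|
  <= `|(Num.ceil N)%:~R - (Num.ceil N')%:~R| * fine (mu U).
Proof.
move=> N_ge0 N'_ge0; rewrite !entry_count_event_count //.
have ceil_ge0 (r : R) : 0 <= r -> 0 <= Num.ceil r.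
  by move=> r_ge0; rewrite ceil_ge0 (lt_le_trans (ltrN10 R)).
rewrite -(ger0_norm (ceil_ge0 _ N_ge0)) -(ger0_norm (ceil_ge0 _ N'_ge0)) -!natr_absz.
exact: dist_event_count hit_meas hit_mu _ _ k.
Qed.

End entry_count_invariant.

Theorem theoremC (R : realType) (M : ptopologicalType)
  (mu : probability (borelType M) R) (f : M -> M) (phi : M -> \bar R)
  (u : nat -> R) (w : nat -> int) (tau : R) :
  hausdorff_space M -> compact [set: M] ->
  continuous f ->
  (forall A : set (borelType M), measurable A -> mu (f @^-1` A) = mu A) ->
  continuous phi ->
  {homo u : m n / (m <= n)%N >-> m <= n} ->
  {homo w : m n / (m <= n)%N >-> m <= n} ->
  0 < tau ->
  (fun n => ((w n)%:~R)%:E * mu [set x | (u n)%:E < phi x])%E @ \oo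
     --> tau%:E ->
  (exists m : probability nat R, forall k : nat,
     (fun n => mu [set x | rare_event_count f phi (u n) (w n) x = k]) @ \oo
       --> m [set k])
  <->
  (exists m : probability nat R, forall k : nat,
     (fun n => mu [set x | entry_count f [set y | (u n)%:E < phi y]%E
                  (tau / fine (mu [set y | (u n)%:E < phi y]%E)) x = k]) @ \oo
       --> m [set k]).
Proof.
move=> _ _ f_cont f_inv phi_cont u_incr _ tau_gt0 wmu_tau.
set U := fun n => [set y | ((u n)%:E < phi y)%E].
have U_open n : open (U n) by exact: open_preimage_ereal_gt.
pose m n := fine (mu (U n)).
have U_meas n : measurable (U n : set (borelType M)) by exact: sub_sigma_algebra.
have muU n : mu (U n) = (m n)%:E by rewrite fineK // fin_num_measure.
have m_ge0 n : 0 <= m n by rewrite -lee_fin -muU measure_ge0.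
have m_dec := measure_ereal_gt_nonincreasing mu phi_cont u_incr.
have wm_tau : (fun n => (w n)%:~R * m n) @ \oo --> tau.
  apply: (fine_cvg (f := fun n => ((w n)%:~R * m n)%:E)).
  by under eq_fun do rewrite EFinM -muU.
pose e n := `|(w n)%:~R - (Num.ceil (tau / m n))%:~R| * m n.
have e0 : e @ \oo --> 0 := dist_ceil_div_mul_cvg0 tau_gt0 m_dec m_ge0 wm_tau.
have pos := cvg_mul_near_gt0 tau_gt0 m_ge0 wm_tau.
pose A n k := [set x | rare_event_count f phi (u n) (w n) x = k].
pose B n k := [set x | entry_count f (U n) (tau / m n) x = k].
have key k : \forall n \near \oo, [/\ mu (A n k) \is a fin_num, mu (B n k) \is a fin_num &
    `|fine (mu (A n k)) - fine (mu (B n k))| <= e n].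
  near=> n; have wn_ge0 : 0 <= (w n)%:~R :> R.
    by rewrite ler0z; have [/ltW] : 0 < w n /\ 0 < m n by near: n.
  have N_ge0 : 0 <= tau / m n by rewrite divr_ge0 ?(ltW tau_gt0).
  have fin := fin_num_entry_count mu f_cont (U_open n).
  split; [exact: fin _ wn_ge0 | exact: fin _ N_ge0 |].
  by have := dist_entry_count f_cont f_inv (U_open n) k wn_ge0 N_ge0; rewrite intrKceil.
split=> -[P P_lim]; exists P => k;
  apply: cvg_fine_dist_le (fin_num_measure P _ _) e0 _ _ (P_lim k) => //;
  by apply: filterS (key k) => n [? ? ?]; rewrite // distrC.
Unshelve. all: end_near.
Qed.
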